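(* Let $\epsilon_1>0$, let $u$ be a utility function on contexts of sensitivity $\Delta u\le1$ (context population size or overlap with a fixed starting context, $-\infty$ on non-matching contexts), and let $C_V$ be a starting context with $f_M(D_{C_V},V)=\mathrm{true}$. Consider the Random Walk Sampling algorithm: initialize the multiset $C_M=[C_V]$ and current context $C=C_V$; repeatedly pick uniformly at random a context $C_i$ connected to $C$ (among those not yet rejected); if $f_M(D_{C_i},V)=\mathrm{true}$, append $C_i$ to $C_M$ and set $C\leftarrow C_i$, otherwise discard $C_i$; stop when $|C_M|>n$ or no candidate connected context remains; finally output $\mathrm{Exp}^{\epsilon_1}_u(D,C_M)$. Then this algorithm satisfies $(2\epsilon_1,\ COE_M(\cdot,V))$-Output Constrained Differential Privacy.
   Context: Dataset $D$ over categorical attributes $A_1,\dots,A_m$ (domain sizes $|A_i|$, all possible values) and metric attribute $M$; $t=\sum_i|A_i|$. A context is a binary vector of length $t$, $c_{ij}=1$ meaning the $j$-th value of $A_i$ is selected; $D_C$ is the set of tuples of $D$ whose value in every $A_i$ is selected by $C$. Two contexts are connected if their Hamming distance is $1$. $f_M(D_C,V)$ is a deterministic test of whether record $V$ is an outlier in $D_C$ w.r.t. $M$; $COE_M(D,V)$ is the set of contexts $C$ with $V\in D_C$ and $f_M(D_C,V)=\mathrm{true}$. Sensitivity $\Delta u=\max|u(D_1,r)-u(D_2,r)|$ over neighboring datasets (differing by adding/removing one record) and outputs $r$. $\mathrm{Exp}^{\epsilon}_u(D,\mathcal R)$ outputs $r\in\mathcal R$ with probability $\exp(\epsilon u(D,r)/(2\Delta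 u))/\sum_{r'\in\mathcal R}\exp(\epsilon u(D,r')/(2\Delta u))$. $D_1,D_2$ are $f$-neighbors if they differ by adding/removing one record and $f(D_1)=f(D_2)\ne\emptyset$; $\mathcal M$ satisfies $(\epsilon,f)$-Output Constrained Differential Privacy if $\Pr[\mathcal M(D_1)\in S]\le e^\epsilon\Pr[\mathcal M(D_2)\in S]$ for all $f$-neighbors and all output sets $S$. *)

From HB Require Import structures.
From mathcomp Require Import all_boot all_order all_algebra.
From mathcomp Require Import reals constructive_ereal ereal sequences exp.

Set Implicit Arguments.
Unset Strict Implicit.
Unset Printing Implicit Defensive.

Import Order.TTheory GRing.Theory Num.Theory.

Section Data.
Variables (m : nat) (dom : 'I_m -> nat) (Mt : eqType).

(* a record: one value for each categorical attribute A_i (|A_i| = dom i), plus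
   the value of the metric attribute M (of type Mt) *)
Definition record : eqType := ({dffun forall i : 'I_m, 'I_(dom i)} * Mt)%type.

(* the t = sum_i |A_i| positions of a context: pairs (i, j), j-th value of A_i *)
Definition attrval : finType := {i : 'I_m & 'I_(dom i)}.

Definition context : finType := {ffun attrval -> bool}.

Definition selects (C : context) (x : record) : bool :=
  [forall i : 'I_m, C (Tagged (fun i => 'I_(dom i)) (x.1 i))].

(* D_C (datasets are multisets of records, represented as sequences) *)
Definition restrict (D : seq record) (C : context) : seq record :=
  [seq x <- D | selects C x].

Definition connected (C1 C2 : context) : bool :=
  #|[pred k | C1 k != C2 k]| == 1%N.

Definition neighbors (D1 D2 : seq record) : Prop :=
  exists r : record, perm_eq D2 (r :: D1) \/ perm_eq D1 (r :: D2).

Definition in_coe (f : seq record -> record -> bool) (D : seq record)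
  (V : record) (C : context) : bool :=
  (V \in restrict D C) && f (restrict D C) V.

Definition COE (f : seq record -> record -> bool) (D : seq record) (V : record)
  : {set context} := [set C | in_coe f D V C].

Definition f_neighbors (F : seq record -> {set context}) (D1 D2 : seq record)
  : Prop := neighbors D1 D2 /\ F D1 = F D2 /\ F D1 != set0.

End Data.

Section Mech.
Variables (m : nat) (dom : 'I_m -> nat) (Mt : eqType) (R : realType).
Local Open Scope ring_scope.

(* a finitely supported distribution: list of (probability, outcome) *)
Fixpoint rws_walk (acc : pred (context dom)) (n : nat) (fuel : nat)
  (C : context dom) (CM : seq (context dom)) (Rej : seq (context dom))
  : seq (R * seq (context dom)) :=
  match fuel with
  | 0 => [:: (1, CM)]
  | fuel'.+1 =>
    if (n < size CM)%N then [:: (1, CM)] else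
    let cand := [seq C' <- enum (context dom) | connected C C' && (C' \notin Rej)] in
    if cand is [::] then [:: (1, CM)] else
    flatten [seq [seq ((size cand)%:R^-1 * pq.1, pq.2)
                 | pq <- if acc C'
                         then rws_walk acc n fuel' C' (rcons CM C') Rej
                         else rws_walk acc n fuel' C CM (C' :: Rej)]
            | C' <- cand]
  end.

(* distribution of the multiset C_M produced by Random Walk Sampling started at CV;
   the fuel n + #|context| + 1 is never exhausted (each step either appends to C_M,
   at most n times, or rejects a new context) *)
Definition rws_dist (acc : pred (context dom)) (n : nat) (CV : context dom)
  : seq (R * seq (context dom)) :=
  rws_walk acc n (n + #|context dom|).+1 CV [:: CV] [::].

Definition weight (eps Delta : R) (uD : context dom -> \bar R) (C : context dom) : R :=
  if uD C is r%:E then expR (eps * r / (2 * Delta)) else 0.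

Definition expmech (w : context dom -> R) (CM : seq (context dom)) (r : context dom) : R :=
  (\sum_(x <- CM | x == r) w x) / (\sum_(x <- CM) w x).

Definition RWS (f : seq (record dom Mt) -> record dom Mt -> bool)
  (u : seq (record dom Mt) -> context dom -> \bar R) (V : record dom Mt)
  (CV : context dom) (n : nat) (eps1 Delta : R) (D : seq (record dom Mt))
  : context dom -> R :=
  fun r => \sum_(pq <- rws_dist (in_coe f D V) n CV)
             pq.1 * expmech (weight eps1 Delta (u D)) pq.2 r.

Definition Pr (P : context dom -> R) (S : {set context dom}) : R := \sum_(r in S) P r.

(* Delta is the sensitivity of u (the least upper bound of |u(D1,r) - u(D2,r)|) *)
Definition is_sensitivity (u : seq (record dom Mt) -> context dom -> \bar R) (Delta : R)
  : Prop :=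
  (forall D1 D2, neighbors D1 D2 -> forall C, (u D1 C <= u D2 C + Delta%:E)%E) /\
  (forall delta : R, delta < Delta ->
     exists D1 D2 C, neighbors D1 D2 /\ (u D2 C + delta%:E < u D1 C)%E).

Definition OCDP_on (P : seq (record dom Mt) -> Prop) (eps : R)
  (F : seq (record dom Mt) -> {set context dom})
  (M : seq (record dom Mt) -> context dom -> R) : Prop :=
  forall D1 D2, P D1 -> P D2 -> f_neighbors F D1 D2 ->
    forall S : {set context dom}, Pr (M D1) S <= expR eps * Pr (M D2) S.

End Mech.

From HB Require Import structures.
From mathcomp Require Import all_boot all_order all_algebra.
From mathcomp Require Import reals constructive_ereal ereal sequences exp.
From mathcomp Require Import ring lra.

(* The random walk only queries D through the acceptance test
   [C \in COE_M(D, V)], and f-neighbours have the same COE set, so the walk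
   induces the same distribution on multisets C_M for both datasets.  The
   privacy loss therefore comes only from the final exponential mechanism:
   changing D moves every weight exp(eps u / (2 Delta)) by a factor at most
   exp(eps / 2), hence the normalised probability by at most exp(eps), which is
   below exp(2 eps). *)

Set Implicit Arguments.
Unset Strict Implicit.
Unset Printing Implicit Defensive.

Import Order.TTheory GRing.Theory Num.Theory.
Local Open Scope ring_scope.

Section Neighbours.
Variables (m : nat) (dom : 'I_m -> nat) (Mt : eqType).

Lemma neighbors_sym (D1 D2 : seq (record dom Mt)) :
  neighbors D1 D2 -> neighbors D2 D1.
Proof. by case=> r [h|h]; exists r; [right|left]. Qed.

Lemma in_coe_eq_COE (f : seq (record dom Mt) -> record dom Mt -> bool)
    (V : record dom Mt) (D1 D2 : seq (record dom Mt)) :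
  COE f D1 V = COE f D2 V -> in_coe f D1 V =1 in_coe f D2 V.
Proof.
move=> eqCOE C.
by have := congr1 (fun A : {set context dom} => C \in A) eqCOE; rewrite !inE.
Qed.

End Neighbours.

Section RandomWalk.
Variables (m : nat) (dom : 'I_m -> nat) (R : realType).

Lemma rws_walk_eq (acc1 acc2 : pred (context dom)) n fuel C CM Rej :
  acc1 =1 acc2 ->
  rws_walk R acc1 n fuel C CM Rej = rws_walk R acc2 n fuel C CM Rej.
Proof.
move=> eq_acc; elim: fuel C CM Rej => [|fuel IH] C CM Rej //=.
case: ifP => // _; case: [seq C' <- _ | _] => // C0 cand.
by congr flatten; apply: eq_map => C'; rewrite eq_acc !IH.
Qed.

Lemma rws_walk_prob_ge0 (acc : pred (context dom)) n fuel C CM Rej pq :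
  pq \in rws_walk R acc n fuel C CM Rej -> 0 <= pq.1.
Proof.
elim: fuel C CM Rej pq => [|fuel IH] C CM Rej pq /=; first by rewrite inE => /eqP ->.
case: ifP => _; first by rewrite inE => /eqP ->.
case: [seq C' <- _ | _] => [|C0 cand]; first by rewrite inE => /eqP ->.
case/flattenP=> _ /mapP[C' _ ->] /mapP[pq' pq'_walk ->] /=.
rewrite mulr_ge0 ?invr_ge0 ?ler0n //.
by move: pq'_walk; case: ifP => _ /IH.
Qed.

End RandomWalk.

Section ExponentialMechanism.
Variables (m : nat) (dom : 'I_m -> nat) (R : realType).
Implicit Types (w : context dom -> R) (uD : context dom -> \bar R).

Lemma weight_ge0 (eps Delta : R) uD C : 0 <= weight eps Delta uD C.
Proof. by rewrite /weight; case: (uD C) => // r; exact: expR_ge0. Qed.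

Lemma weight_le_shift (eps Delta : R) uD1 uD2 C :
  0 < Delta -> 0 <= eps -> uD2 C != +oo%E -> (uD1 C <= uD2 C + Delta%:E)%E ->
  weight eps Delta uD1 C <= expR (eps / 2) * weight eps Delta uD2 C.
Proof.
move=> Delta_gt0 eps_ge0; rewrite /weight.
case: (uD2 C) => [r2| |] // _; case: (uD1 C) => [r1| |] //=;
  try by move=> _; rewrite mulr_ge0 ?expR_ge0.
rewrite -EFinD lee_fin -expRD ler_expR => r1_le.
have -> : eps / 2 = eps / (2 * Delta) * Delta.
  by rewrite invfM mulrA -mulrA mulVf ?mulr1 ?gt_eqF.
rewrite ![eps * _ / _]mulrAC -mulrDr addrC.
by rewrite ler_wpM2l // divr_ge0 // mulr_ge0 // ltW.
Qed.

Lemma expmech_ge0 w CM r : (forall C, 0 <= w C) -> 0 <= expmech w CM r.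
Proof. by move=> w_ge0; rewrite divr_ge0 ?sumr_ge0. Qed.

(* One factor a comes from the selected copies, one from the normalising sum. *)
Lemma expmech_le_mul (a : R) w1 w2 CM r :
  (forall C, 0 <= w1 C) -> (forall C, 0 <= w2 C) ->
  (forall C, w1 C <= a * w2 C) -> (forall C, w2 C <= a * w1 C) ->
  expmech w1 CM r <= a * a * expmech w2 CM r.
Proof.
move=> w1_ge0 w2_ge0 w12 w21; rewrite /expmech.
set n1 := \sum_(x <- CM | x == r) w1 x; set n2 := \sum_(x <- CM | x == r) w2 x.
set d1 := \sum_(x <- CM) w1 x; set d2 := \sum_(x <- CM) w2 x.
have n1_le : n1 <= a * n2 by rewrite mulr_sumr ler_sum.
have d1_le : d1 <= a * d2 by rewrite mulr_sumr ler_sum.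
have d2_le : d2 <= a * d1 by rewrite mulr_sumr ler_sum.
have n1_ge0 : 0 <= n1 by rewrite sumr_ge0.
have n2_ge0 : 0 <= n2 by rewrite sumr_ge0.
have d1_ge0 : 0 <= d1 by rewrite sumr_ge0.
have d2_ge0 : 0 <= d2 by rewrite sumr_ge0.
have [->|d1_neq0] := eqVneq d1 0.
  by rewrite invr0 mulr0 mulr_ge0 ?expmech_ge0 // -expr2 sqr_ge0.
have d1_gt0 : 0 < d1 by rewrite lt_def d1_neq0.
have d2_gt0 : 0 < d2.
  by rewrite lt_def d2_ge0 andbT; apply: contraTneq d1_le => ->; rewrite mulr0 -ltNge.
rewrite ler_pdivrMr // mulrAC mulrA ler_pdivlMr //.
have -> : a * a * d1 * n2 = (a * n2) * (a * d1) by ring.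
exact: ler_pM.
Qed.

Lemma expmech_weight_le (eps Delta : R) uD1 uD2 CM r :
  0 < Delta -> 0 <= eps ->
  (forall C, uD1 C != +oo%E) -> (forall C, uD2 C != +oo%E) ->
  (forall C, (uD1 C <= uD2 C + Delta%:E)%E) ->
  (forall C, (uD2 C <= uD1 C + Delta%:E)%E) ->
  expmech (weight eps Delta uD1) CM r <= expR eps * expmech (weight eps Delta uD2) CM r.
Proof.
move=> Delta_gt0 eps_ge0 uD1_fin uD2_fin u12 u21.
have -> : expR eps = expR (eps / 2) * expR (eps / 2) by rewrite -expRD -splitr.
apply: expmech_le_mul => C; rewrite ?weight_ge0 //; exact: weight_le_shift.
Qed.

End ExponentialMechanism.

Section Mixtures.
Variable R : realType.

Lemma mixture_le_mul (T : eqType) (P : seq (R * T)) (g1 g2 : T -> R) (c : R) :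
  (forall pq, pq \in P -> 0 <= pq.1) -> (forall x, g1 x <= c * g2 x) ->
  \sum_(pq <- P) pq.1 * g1 pq.2 <= c * \sum_(pq <- P) pq.1 * g2 pq.2.
Proof.
move=> P_ge0 g12; rewrite mulr_sumr big_seq [X in _ <= X]big_seq.
by apply: ler_sum => pq /P_ge0 pq_ge0; rewrite mulrCA ler_wpM2l.
Qed.

Lemma Pr_le_mul (m : nat) (dom : 'I_m -> nat) (P1 P2 : context dom -> R) c S :
  (forall r, P1 r <= c * P2 r) -> Pr P1 S <= c * Pr P2 S.
Proof. by move=> P12; rewrite /Pr mulr_sumr ler_sum. Qed.

End Mixtures.

Theorem theorem6 (m : nat) (dom : 'I_m -> nat) (Mt : eqType) (R : realType)
  (f : seq (record dom Mt) -> record dom Mt -> bool)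
  (u : seq (record dom Mt) -> context dom -> \bar R)
  (V : record dom Mt) (CV : context dom) (n : nat) (eps1 Delta : R) :
  0 < eps1 ->
  (forall D C, u D C != +oo%E) ->
  0 < Delta -> Delta <= 1 -> is_sensitivity u Delta ->
  OCDP_on (fun D => in_coe f D V CV) (2 * eps1) (fun D => COE f D V)
    (RWS f u V CV n eps1 Delta).
Proof.
move=> eps1_gt0 u_fin Delta_gt0 _ [u_sens _] D1 D2 _ _ [nbr [eqCOE _]] S.
apply: Pr_le_mul => r.
have expmech_le CM : expmech (weight eps1 Delta (u D1)) CM r <=
    expR (2 * eps1) * expmech (weight eps1 Delta (u D2)) CM r.
  apply: le_trans (expmech_weight_le _ _ Delta_gt0 (ltW eps1_gt0) (u_fin D1)
    (u_fin D2) (u_sens _ _ nbr) (u_sens _ _ (neighbors_sym nbr))) _.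
  by rewrite ler_wpM2r ?ler_expR ?expmech_ge0 //; [exact: weight_ge0 | lra].
rewrite /RWS /rws_dist (rws_walk_eq _ _ _ _ _ _ (in_coe_eq_COE eqCOE)).
by apply: mixture_le_mul expmech_le; exact: rws_walk_prob_ge0.
Qed.
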